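(* Let $N_1,N_3,J,L\in\mathbb{N}$ and let $\hat{\mathcal{X}}\in\mathbb{R}^{N_1\times J\times N_3\times L}$ be a real fourth-order tensor with slices $\hat{\mathcal{X}}_{jl}\in\mathbb{R}^{N_1\times N_3}$ given by $(\hat{\mathcal{X}}_{jl})_{ik}=\hat{\mathcal{X}}_{ijkl}$. Consider all factorizations $\hat{\mathcal{X}}_{jl}=\mathbf{U}(\mathbf{R}_j\mathbf{T}_l)\mathbf{V}^\top$ for all $j=1,\dots,J$, $l=1,\dots,L$, where $D\in\mathbb{N}$ is arbitrary, $\mathbf{U}\in\mathbb{R}^{N_1\times D}$, $\mathbf{V}\in\mathbb{R}^{N_3\times D}$, and $\mathbf{R}_j,\mathbf{T}_l\in\mathbb{R}^{D\times D}$ are real diagonal matrices. Then $$\|\hat{\mathcal{X}}\|_*=\min_{\substack{D,\ \mathbf{U},\mathbf{V},(\mathbf{R}_j),(\mathbf{T}_l):\\ \hat{\mathcal{X}}_{jl}=\mathbf{U}(\mathbf{R}_j\mathbf{T}_l)\mathbf{V}^\top\ \forall j,l}}\ \frac{1}{4\sqrt{JL}}\sum_{l=1}^{L}\sum_{j=1}^{J}\Big(\|\mathbf{U}\mathbf{R}_j\|_F^2+\|\mathbf{V}\mathbf{T}_l^\top\|_F^2+\|\mathbf{U}\mathbf{T}_l\|_F^2+\|\mathbf{V}\mathbf{R}_j^\top\|_F^2\Big).$$ Moreover, every factorization attaining this minimum satisfies, for every $d\in\{1,\dots,D\}$, $$\sqrt{L}\,\|\mathbf{u}_{:d}\|_2\|\mathbf{r}_{:d}\|_2=\sqrt{J}\,\|\mathbf{v}_{:d}\|_2\|\mathbf{t}_{:d}\|_2\quad\text{and}\quad\sqrt{J}\,\|\mathbf{u}_{:d}\|_2\|\mathbf{t}_{:d}\|_2=\sqrt{L}\,\|\mathbf{v}_{:d}\|_2\|\mathbf{r}_{:d}\|_2,$$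 where $\mathbf{u}_{:d},\mathbf{v}_{:d}$ are the $d$-th columns of $\mathbf{U},\mathbf{V}$, $\mathbf{r}_{:d}\in\mathbb{R}^J$ is the $d$-th column of $\widetilde{\mathbf{R}}\in\mathbb{R}^{J\times D}$ with $\widetilde{\mathbf{R}}(j,d)=\mathbf{R}_j(d,d)$, and $\mathbf{t}_{:d}\in\mathbb{R}^L$ is the $d$-th column of $\widetilde{\mathbf{T}}\in\mathbb{R}^{L\times D}$ with $\widetilde{\mathbf{T}}(l,d)=\mathbf{T}_l(d,d)$.
   Context: $\|\cdot\|_F$ is the Frobenius norm and $\|\cdot\|_2$ the Euclidean norm. The tensor nuclear 2-norm of a real tensor $\mathcal{A}\in\mathbb{R}^{n_1}\otimes\mathbb{R}^{n_2}\otimes\mathbb{R}^{n_3}\otimes\mathbb{R}^{n_4}$ is $\|\mathcal{A}\|_*=\min\big\{\sum_{i=1}^r\prod_{k=1}^4\|\mathbf{a}_{k,i}\|_2:\ \mathcal{A}=\sum_{i=1}^r\mathbf{a}_{1,i}\otimes\mathbf{a}_{2,i}\otimes\mathbf{a}_{3,i}\otimes\mathbf{a}_{4,i},\ r\in\mathbb{N},\ \mathbf{a}_{k,i}\in\mathbb{R}^{n_k}\big\}$, where $\otimes$ is the outer product. The factorization condition is equivalent to $\hat{\mathcal{X}}=\sum_{d=1}^D\mathbf{u}_{:d}\otimes\mathbf{r}_{:d}\otimes\mathbf{v}_{:d}\otimes\mathbf{t}_{:d}$. *)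

From HB Require Import structures.
From mathcomp Require Import all_boot all_order all_algebra.
From mathcomp Require Import all_classical reals.
Set Implicit Arguments. Unset Strict Implicit. Unset Printing Implicit Defensive.
Import Order.TTheory GRing.Theory Num.Theory.
Local Open Scope ring_scope.
Local Open Scope classical_set_scope.

Definition tensor4 (R : realType) (n1 n2 n3 n4 : nat) :=
  'I_n1 -> 'I_n2 -> 'I_n3 -> 'I_n4 -> R.

Definition norm2 (R : realType) (n : nat) (v : 'I_n -> R) : R :=
  Num.sqrt (\sum_(i < n) v i ^+ 2).

Definition frob2 (R : realType) (m n : nat) (A : 'M[R]_(m, n)) : R :=
  \sum_(i < m) \sum_(k < n) A i k ^+ 2.

Definition nuclear_costs (R : realType) (n1 n2 n3 n4 : nat)
    (X : tensor4 R n1 n2 n3 n4) : set R :=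
  [set c | exists (r : nat) (a1 : 'I_r -> 'I_n1 -> R) (a2 : 'I_r -> 'I_n2 -> R)
             (a3 : 'I_r -> 'I_n3 -> R) (a4 : 'I_r -> 'I_n4 -> R),
     (forall i1 i2 i3 i4,
        X i1 i2 i3 i4 = \sum_(s < r) a1 s i1 * a2 s i2 * a3 s i3 * a4 s i4) /\
     c = \sum_(s < r) norm2 (a1 s) * norm2 (a2 s) * norm2 (a3 s) * norm2 (a4 s)].

(* Tensor nuclear 2-norm (the min in the paper; taken here as the infimum). *)
Definition nuclear_norm (R : realType) (n1 n2 n3 n4 : nat)
    (X : tensor4 R n1 n2 n3 n4) : R := inf (nuclear_costs X).

Definition is_factorization (R : realType) (N1 J N3 L D : nat)
    (X : tensor4 R N1 J N3 L) (U : 'M[R]_(N1, D)) (V : 'M[R]_(N3, D))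
    (Rm : 'I_J -> 'M[R]_D) (Tm : 'I_L -> 'M[R]_D) : Prop :=
  (forall j, is_diag_mx (Rm j)) /\ (forall l, is_diag_mx (Tm l)) /\
  (forall i j k l, X i j k l = (U *m (Rm j *m Tm l) *m V^T) i k).

Definition fact_cost (R : realType) (N1 J N3 L D : nat)
    (U : 'M[R]_(N1, D)) (V : 'M[R]_(N3, D))
    (Rm : 'I_J -> 'M[R]_D) (Tm : 'I_L -> 'M[R]_D) : R :=
  (4 * Num.sqrt ((J * L)%:R))^-1 *
  \sum_(l < L) \sum_(j < J)
     (frob2 (U *m Rm j) + frob2 (V *m (Tm l)^T)
      + frob2 (U *m Tm l) + frob2 (V *m (Rm j)^T)).

(* By Caratheodory's argument (the rank-one terms of a decomposition with more
   than N1 J N3 L terms are linearly dependent, and moving along the dependency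
   kills a term without increasing the cost) it suffices to minimise over
   decompositions with N1 J N3 L terms.  Rescaling the four factors of each term
   to equal norms makes those of bounded cost a compact set, on which the
   continuous cost attains its minimum, so the nuclear norm is attained.

   A factorization U, V, (R_j), (T_l) is the decomposition with terms
   u_d (x) r_d (x) v_d (x) t_d, and by AM-GM its cost is the cost of that
   decomposition plus the nonnegative defect
     (sqrt L |u_d||r_d| - sqrt J |v_d||t_d|)^2 + (sqrt J |u_d||t_d| - sqrt L |v_d||r_d|)^2
   summed over d and divided by 4 sqrt(JL).  Rescaling the columns of an optimal
   decomposition makes the defect vanish, and a factorization whose cost is the
   nuclear norm must have zero defect, which is the balance condition. *)

From HB Require Import structures.
From mathcomp Require Import all_boot all_order all_algebra.
From mathcomp Require Import all_classical all_reals all_analysis.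
From mathcomp Require Import ring lra.
Import Order.TTheory GRing.Theory Num.Theory.
Import numFieldNormedType.Exports.
Set Implicit Arguments. Unset Strict Implicit. Unset Printing Implicit Defensive.
Local Open Scope ring_scope.

Section Norm2.
Variable R : realType.
Implicit Types (n : nat) (t : R).

Lemma norm2_ge0 n (v : 'I_n -> R) : 0 <= norm2 v.
Proof. exact: sqrtr_ge0. Qed.

Lemma norm2_sqr n (v : 'I_n -> R) : norm2 v ^+ 2 = \sum_i v i ^+ 2.
Proof. by rewrite sqr_sqrtr // sumr_ge0 // => i _; exact: sqr_ge0. Qed.

Lemma norm2_scale n (c : R) (v : 'I_n -> R) :
  norm2 (fun i => c * v i) = `|c| * norm2 v.
Proof.
rewrite /norm2 (eq_bigr (fun i => c ^+ 2 * v i ^+ 2)) => [|i _]; last exact: exprMn.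
by rewrite -mulr_sumr sqrtrM ?sqr_ge0 // sqrtr_sqr.
Qed.

Lemma norm2_eq0 n (v : 'I_n -> R) : norm2 v = 0 -> forall i, v i = 0.
Proof.
move=> v0 i; have : \sum_i v i ^+ 2 = 0 by rewrite -norm2_sqr v0 expr0n.
move/psumr_eq0P => /(_ (fun j _ => sqr_ge0 (v j)) i isT) /eqP.
by rewrite sqrf_eq0 => /eqP.
Qed.

Lemma norm2_dim0 n (v : 'I_n -> R) : n = 0%N -> norm2 v = 0.
Proof. by move=> n0; rewrite /norm2 big1 ?sqrtr0 // => i; have := ltn_ord i; rewrite {2}n0. Qed.

Lemma norm2_0 n : norm2 (fun _ : 'I_n => 0 : R) = 0.
Proof. by rewrite /norm2 big1 ?sqrtr0 // => i _; rewrite expr0n. Qed.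

Lemma normr_le_norm2 n (v : 'I_n -> R) i : `|v i| <= norm2 v.
Proof.
rewrite -sqrtr_sqr ler_wsqrtr // (bigD1 i) //= lerDl.
by apply: sumr_ge0 => j _; exact: sqr_ge0.
Qed.

Lemma norm2_normalize_le n t (v : 'I_n -> R) : 0 <= t ->
  norm2 (fun i => t / norm2 v * v i) <= t.
Proof.
move=> t0; rewrite norm2_scale; have [->|v0] := eqVneq (norm2 v) 0; first by rewrite mulr0.
by rewrite ger0_norm ?divr_ge0 ?norm2_ge0 // divfK.
Qed.

Lemma norm2_normalize n t (v : 'I_n -> R) : 0 <= t -> norm2 v != 0 ->
  norm2 (fun i => t / norm2 v * v i) = t.
Proof. by move=> t0 v0; rewrite norm2_scale ger0_norm ?divr_ge0 ?norm2_ge0 // divfK. Qed.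

End Norm2.

Section Decomposition.
Variables (R : realType) (N1 J N3 L : nat).

Record decomp (r : nat) := Decomp {
  fac1 : 'I_r -> 'I_N1 -> R;
  fac2 : 'I_r -> 'I_J -> R;
  fac3 : 'I_r -> 'I_N3 -> R;
  fac4 : 'I_r -> 'I_L -> R }.

Definition rank1_term r (d : decomp r) s i1 i2 i3 i4 :=
  fac1 d s i1 * fac2 d s i2 * fac3 d s i3 * fac4 d s i4.

Definition decomposes (X : tensor4 R N1 J N3 L) r (d : decomp r) :=
  forall i1 i2 i3 i4, X i1 i2 i3 i4 = \sum_s rank1_term d s i1 i2 i3 i4.

Definition term_cost r (d : decomp r) s :=
  norm2 (fac1 d s) * norm2 (fac2 d s) * norm2 (fac3 d s) * norm2 (fac4 d s).

Definition decomp_cost r (d : decomp r) := \sum_s term_cost d s.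

Definition scale_decomp r (c1 c2 c3 c4 : 'I_r -> R) (d : decomp r) :=
  Decomp (fun s i => c1 s * fac1 d s i) (fun s i => c2 s * fac2 d s i)
         (fun s i => c3 s * fac3 d s i) (fun s i => c4 s * fac4 d s i).

Definition normalize_decomp r (t1 t2 t3 t4 : 'I_r -> R) (d : decomp r) :=
  scale_decomp (fun s => t1 s / norm2 (fac1 d s)) (fun s => t2 s / norm2 (fac2 d s))
               (fun s => t3 s / norm2 (fac3 d s)) (fun s => t4 s / norm2 (fac4 d s)) d.

Definition drop_term r (d : decomp r.+1) (s0 : 'I_r.+1) :=
  Decomp (fun s => fac1 d (lift s0 s)) (fun s => fac2 d (lift s0 s))
         (fun s => fac3 d (lift s0 s)) (fun s => fac4 d (lift s0 s)).

Definition zero_extend r m n (f : 'I_r -> 'I_n -> R) (s : 'I_m) : 'I_n -> R :=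
  oapp f (fun _ => 0) (insub (val s)).

Definition pad_decomp r m (d : decomp r) : decomp m :=
  Decomp (zero_extend (fac1 d)) (zero_extend (fac2 d))
         (zero_extend (fac3 d)) (zero_extend (fac4 d)).

Variable X : tensor4 R N1 J N3 L.

Lemma term_cost_ge0 r (d : decomp r) s : 0 <= term_cost d s.
Proof. by rewrite !mulr_ge0 ?norm2_ge0. Qed.

Lemma term_cost_le_decomp_cost r (d : decomp r) s : term_cost d s <= decomp_cost d.
Proof.
by rewrite /decomp_cost (bigD1 s) //= lerDl sumr_ge0 // => t _; exact: term_cost_ge0.
Qed.

Lemma rank1_term_eq0 r (d : decomp r) s : term_cost d s = 0 ->
  forall i1 i2 i3 i4, rank1_term d s i1 i2 i3 i4 = 0.
Proof.
move=> /eqP; rewrite !mulf_eq0 -!orbA => d0 i1 i2 i3 i4.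
by case/or4P: d0 => /eqP/norm2_eq0 v0; rewrite /rank1_term v0 ?(mul0r, mulr0).
Qed.

Lemma rank1_term_scale r c1 c2 c3 c4 (d : decomp r) s i1 i2 i3 i4 :
  rank1_term (scale_decomp c1 c2 c3 c4 d) s i1 i2 i3 i4
  = c1 s * c2 s * c3 s * c4 s * rank1_term d s i1 i2 i3 i4.
Proof. by rewrite /rank1_term /=; ring. Qed.

Lemma term_cost_scale r c1 c2 c3 c4 (d : decomp r) s :
  term_cost (scale_decomp c1 c2 c3 c4 d) s
  = `|c1 s * c2 s * c3 s * c4 s| * term_cost d s.
Proof. by rewrite /term_cost /= !norm2_scale !normrM; ring. Qed.

Lemma decomposes_scale_unit r c1 c2 c3 c4 (d : decomp r) :
  (forall s, term_cost d s != 0 -> c1 s * c2 s * c3 s * c4 s = 1) ->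
  decomposes X d ->
  decomposes X (scale_decomp c1 c2 c3 c4 d) /\
  decomp_cost (scale_decomp c1 c2 c3 c4 d) = decomp_cost d.
Proof.
move=> c_prod dX; split=> [i1 i2 i3 i4|]; last first.
  apply: eq_bigr => s _; rewrite term_cost_scale.
  by have [->|/c_prod->] := eqVneq (term_cost d s) 0; rewrite ?mulr0 ?normr1 ?mul1r.
rewrite dX; apply: eq_bigr => s _; rewrite rank1_term_scale.
by have [/rank1_term_eq0->|/c_prod->] := eqVneq (term_cost d s) 0; rewrite ?mulr0 ?mul1r.
Qed.

Lemma decomposes_normalize r (t1 t2 t3 t4 : 'I_r -> R) (d : decomp r) :
  (forall s, t1 s * t2 s * t3 s * t4 s = term_cost d s) -> decomposes X d ->
  decomposes X (normalize_decomp t1 t2 t3 t4 d) /\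
  decomp_cost (normalize_decomp t1 t2 t3 t4 d) = decomp_cost d.
Proof.
move=> t_prod; apply: decomposes_scale_unit => s ds0.
move: (ds0); rewrite /term_cost !mulf_eq0 !negb_or -!andbA => /and4P[n1 n2 n3 n4].
transitivity ((t1 s * t2 s * t3 s * t4 s) / term_cost d s); last by rewrite t_prod divff.
by rewrite /term_cost; field; rewrite n1 n2 n3 n4.
Qed.

Lemma decomposes_drop r (d : decomp r.+1) s0 : decomposes X d ->
  (forall i1 i2 i3 i4, rank1_term d s0 i1 i2 i3 i4 = 0) ->
  decomposes X (drop_term d s0).
Proof. by move=> dX d0 i1 i2 i3 i4; rewrite dX (bigD1_ord s0) //= d0 add0r. Qed.

Lemma decomp_cost_drop r (d : decomp r.+1) s0 :
  decomp_cost (drop_term d s0) <= decomp_cost d.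
Proof. by rewrite [leRHS](bigD1_ord s0) //= lerDr term_cost_ge0. Qed.

Lemma sum_zero_extend r m (F : 'I_r -> R) : (r <= m)%N ->
  \sum_(s < m) oapp F 0 (insub (val s)) = \sum_(s < r) F s.
Proof.
move=> rm; rewrite [RHS](eq_bigr (fun s => oapp F 0 (insub (val s)))) => [|s _]; last first.
  by rewrite valK.
rewrite [RHS](big_ord_widen m (fun k => oapp F 0 (insub k))) // [RHS]big_mkcond /=.
by apply: eq_bigr => s _; case: ltnP => // sr; rewrite insubF // ltnNge sr.
Qed.

Lemma decomposes_pad r m (d : decomp r) : (r <= m)%N -> decomposes X d ->
  decomposes X (pad_decomp m d) /\ decomp_cost (pad_decomp m d) = decomp_cost d.
Proof.
move=> rm dX; split=> [i1 i2 i3 i4|].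
  rewrite dX -(sum_zero_extend (fun s => rank1_term d s i1 i2 i3 i4) rm).
  apply: eq_bigr => s _.
  by rewrite /rank1_term /= /zero_extend; case: insub => [s'|] /=; rewrite ?mul0r.
rewrite /decomp_cost -(sum_zero_extend (term_cost d) rm); apply: eq_bigr => s _.
rewrite /term_cost /= /zero_extend; case: insub => [s'|] //=.
by rewrite norm2_0 !mul0r.
Qed.

Definition factor_norms_le r (d : decomp r) (b : 'I_r -> R) := forall s,
  [/\ norm2 (fac1 d s) <= b s, norm2 (fac2 d s) <= b s,
      norm2 (fac3 d s) <= b s & norm2 (fac4 d s) <= b s].

Lemma decomp_bounded_factors r (d : decomp r) : decomposes X d ->
  exists2 d' : decomp r, decomposes X d' /\ decomp_cost d' = decomp_cost d &
    factor_norms_le d' (fun s => Num.sqrt (Num.sqrt (term_cost d s))).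
Proof.
pose q s := Num.sqrt (Num.sqrt (term_cost d s)).
have q_ge0 s : 0 <= q s by exact: sqrtr_ge0.
move=> dX; exists (normalize_decomp q q q q d); last first.
  by move=> s; split; apply: norm2_normalize_le.
apply: decomposes_normalize dX => s.
have -> : term_cost d s = q s ^+ 4.
  by rewrite (exprM _ 2 2) !sqr_sqrtr ?sqrtr_ge0 ?term_cost_ge0.
by ring.
Qed.

End Decomposition.

Lemma rows_dependent (F : fieldType) m n (A : 'M[F]_(m, n)) : (n < m)%N ->
  exists2 v : 'rV_m, v != 0 & v *m A = 0.
Proof.
move=> nm; have /rowV0Pn[v /sub_kermxP vA v0] : kermx A != 0.
  by rewrite kermx_eq0 /row_free neq_ltn (leq_ltn_trans (rank_leq_col A) nm).
by exists v.
Qed.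

Lemma exists_pos_coef (R : realDomainType) n (mu p : 'I_n -> R) :
  (exists s, mu s != 0) -> (forall s, 0 < p s) -> 0 <= \sum_s mu s * p s ->
  exists s, 0 < mu s.
Proof.
move=> [s0 mu_s0] p_gt0 sum_ge0; apply: contrapT => /forallNP mu_ngt0.
have terms_ge0 t : 0 <= - (mu t * p t).
  have := p_gt0 t; have : mu t <= 0 by rewrite leNgt; apply/negP.
  by rewrite oppr_ge0; nra.
have : \sum_t - (mu t * p t) = 0.
  by apply/eqP; rewrite eq_le sumr_ge0 // andbT sumrN oppr_le0.
move/psumr_eq0P => /(_ (fun t _ => terms_ge0 t) s0 isT) /eqP.
by rewrite oppr_eq0 mulf_eq0 (negbTE mu_s0) gt_eqF.
Qed.

Section Caratheodory.
Variables (R : realType) (N1 J N3 L : nat) (X : tensor4 R N1 J N3 L).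
Local Notation decomp := (decomp R N1 J N3 L).
Local Notation nentries := #|{: 'I_N1 * 'I_J * 'I_N3 * 'I_L}|.

Lemma rank1_terms_dependent r (d : decomp r) : (nentries < r)%N ->
  exists2 mu : 'I_r -> R, exists s, mu s != 0 &
    forall i1 i2 i3 i4, \sum_s mu s * rank1_term d s i1 i2 i3 i4 = 0.
Proof.
pose M : 'M[R]_(r, nentries) :=
  \matrix_(s, x) let y := enum_val x in rank1_term d s y.1.1.1 y.1.1.2 y.1.2 y.2.
move=> lt_r; have [v /rV0Pn[s vs] vA] := rows_dependent M lt_r.
exists (fun s => v 0 s); first by exists s.
move=> i1 i2 i3 i4.
have := congr1 (fun w : 'rV_nentries => w 0 (enum_rank (i1, i2, i3, i4))) vA.
by rewrite !mxE; under eq_bigr do rewrite mxE enum_rankK.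
Qed.

Lemma decomp_shorten_along r (d : decomp r.+1) (mu : 'I_r.+1 -> R) :
  decomposes X d -> (forall s, 0 < term_cost d s) -> (exists s, mu s != 0) ->
  (forall i1 i2 i3 i4, \sum_s mu s * rank1_term d s i1 i2 i3 i4 = 0) ->
  0 <= \sum_s mu s * term_cost d s ->
  exists2 d' : decomp r, decomposes X d' & decomp_cost d' <= decomp_cost d.
Proof.
move=> dX cost_gt0 mu_neq0 mu_dep mu_cost.
have [s1 mu_s1] := exists_pos_coef mu_neq0 cost_gt0 mu_cost.
have [s0 _ mu_max] := @real_arg_maxP R _ s1 xpredT mu isT (fun s _ => num_real (mu s)).
have mu_s0 : 0 < mu s0 by apply: lt_le_trans mu_s1 (mu_max s1 isT).
(* Scale the first factors by c = 1 - mu / mu s0: as s0 maximises mu, c >= 0 and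
   c s0 = 0, and the cost drops by (sum_s mu s * term_cost d s) / mu s0 >= 0. *)
pose c s := 1 - mu s / mu s0.
have c_ge0 s : 0 <= c s by rewrite subr_ge0 ler_pdivrMr // mul1r; exact: mu_max.
pose d1 := scale_decomp c (fun=> 1) (fun=> 1) (fun=> 1) d.
have d1X : decomposes X d1.
  move=> i1 i2 i3 i4; under eq_bigr do rewrite rank1_term_scale !mulr1 mulrBl mul1r.
  rewrite sumrB -dX.
  rewrite (eq_bigr (fun s => (mu s0)^-1 * (mu s * rank1_term d s i1 i2 i3 i4))) => [|s _].
    by rewrite -mulr_sumr mu_dep mulr0 subr0.
  by rewrite mulrAC mulrC.
have d1_s0 i1 i2 i3 i4 : rank1_term d1 s0 i1 i2 i3 i4 = 0.
  by rewrite rank1_term_scale /c divff ?gt_eqF // subrr !mul0r.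
have d1_cost : decomp_cost d1 <= decomp_cost d.
  rewrite /decomp_cost.
  rewrite (eq_bigr (fun s => term_cost d s - (mu s0)^-1 * (mu s * term_cost d s))) => [|s _].
    by rewrite sumrB -mulr_sumr gerBl mulr_ge0 // invr_ge0 ltW.
  by rewrite term_cost_scale !mulr1 ger0_norm // /c; ring.
exists (drop_term d1 s0); first exact: decomposes_drop.
exact: le_trans (decomp_cost_drop d1 s0) d1_cost.
Qed.

Lemma decomp_shorten r (d : decomp r.+1) : (nentries < r.+1)%N -> decomposes X d ->
  exists2 d' : decomp r, decomposes X d' & decomp_cost d' <= decomp_cost d.
Proof.
move=> lt_r dX.
case: (pselect (exists s, term_cost d s = 0)) => [[s0 /rank1_term_eq0 d0]|].
  by exists (drop_term d s0); [exact: decomposes_drop | exact: decomp_cost_drop].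
move=> /forallNP cost_neq0.
have cost_gt0 s : 0 < term_cost d s by rewrite lt_def term_cost_ge0 andbT; apply/eqP.
have [mu mu_neq0 mu_dep] := rank1_terms_dependent d lt_r.
have [mu_cost|mu_cost] := leP 0 (\sum_s mu s * term_cost d s).
  exact: decomp_shorten_along mu_neq0 mu_dep mu_cost.
apply: (@decomp_shorten_along _ _ (fun s => - mu s)) => //.
- by have [s mu_s] := mu_neq0; exists s; rewrite oppr_eq0.
- by move=> i1 i2 i3 i4; under eq_bigr do rewrite mulNr; rewrite sumrN mu_dep oppr0.
- by under eq_bigr do rewrite mulNr; rewrite sumrN oppr_ge0 ltW.
Qed.

Lemma decomp_bounded_length r (d : decomp r) : decomposes X d ->
  exists2 d' : decomp nentries, decomposes X d' & decomp_cost d' <= decomp_cost d.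
Proof.
have pad r' (d' : decomp r') : (r' <= nentries)%N -> decomposes X d' ->
    exists2 d'' : decomp nentries, decomposes X d'' & decomp_cost d'' <= decomp_cost d'.
  move=> r'_le d'X; have [padX pad_cost] := decomposes_pad r'_le d'X.
  by exists (pad_decomp _ d'); rewrite ?pad_cost.
elim: r d => [|r IH] d dX; first exact: pad.
have [r_le|lt_r] := leqP r.+1 nentries; first exact: pad.
have [d' d'X d'_cost] := decomp_shorten lt_r dX.
have [d'' d''X d''_cost] := IH d' d'X.
by exists d''; last exact: le_trans d''_cost d'_cost.
Qed.

End Caratheodory.

Local Open Scope classical_set_scope.

Section Topology.
Variable R : realType.

Lemma continuous_norm2 (T : topologicalType) n (G : T -> 'I_n -> R) :
  (forall i, continuous (fun x => G x i)) -> continuous (fun x => norm2 (G x)).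
Proof.
move=> G_cont x; apply: continuous_comp; last exact: sqrt_continuous.
apply: (@continuous_big R 'I_n +%R 0 xpredT add_continuous) => i _ {}x.
exact: continuousM (G_cont i x) (G_cont i x).
Qed.

Section EntryContinuity.
Variables (N1 J N3 L r : nat) (T : topologicalType) (D : T -> decomp R N1 J N3 L r) (s : 'I_r).
Hypothesis fac1_cont : forall i, continuous (fun x => fac1 (D x) s i).
Hypothesis fac2_cont : forall j, continuous (fun x => fac2 (D x) s j).
Hypothesis fac3_cont : forall k, continuous (fun x => fac3 (D x) s k).
Hypothesis fac4_cont : forall l, continuous (fun x => fac4 (D x) s l).

Lemma continuous_rank1_term i1 i2 i3 i4 :
  continuous (fun x => rank1_term (D x) s i1 i2 i3 i4).
Proof.
move=> x; rewrite /rank1_term.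
exact: continuousM (continuousM (continuousM (@fac1_cont i1 x)
  (@fac2_cont i2 x)) (@fac3_cont i3 x)) (@fac4_cont i4 x).
Qed.

Lemma continuous_term_cost : continuous (fun x => term_cost (D x) s).
Proof.
move=> x; rewrite /term_cost.
exact: continuousM (continuousM (continuousM
  (@continuous_norm2 _ _ _ (@fac1_cont) x) (@continuous_norm2 _ _ _ (@fac2_cont) x))
  (@continuous_norm2 _ _ _ (@fac3_cont) x)) (@continuous_norm2 _ _ _ (@fac4_cont) x).
Qed.

End EntryContinuity.

Lemma closed_forall (T : topologicalType) I (A : I -> set T) :
  (forall i, closed (A i)) -> closed [set x | forall i, A i x].
Proof.
move=> A_closed; have -> : [set x | forall i, A i x] = \bigcap_(i in setT) A i.
  by apply/seteqP; split=> x /= Ax i //; exact: Ax.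
by apply: closed_bigI => i _; exact: A_closed.
Qed.

Lemma closed_eq_cst (T : topologicalType) (f : T -> R) c :
  continuous f -> closed [set x | c = f x].
Proof.
move=> f_cont; have -> : [set x | c = f x] = f @^-1` [set c] by apply/seteqP; split=> x /=.
by apply: preimage_closed; [move=> x _; exact: f_cont | exact: closed_eq].
Qed.

Lemma closed_le_cst (T : topologicalType) (f : T -> R) c :
  continuous f -> closed [set x | f x <= c].
Proof.
move=> f_cont; have -> : [set x | f x <= c] = f @^-1` [set y | y <= c] by [].
by apply: preimage_closed; [move=> x _; exact: f_cont | exact: closed_le].
Qed.

End Topology.

Lemma row_mx_entry_le (R : numDomainType) m n1 n2 (A : 'M[R]_(m, n1)) (B : 'M[R]_(m, n2)) c :
  (forall i j, `|A i j| <= c) -> (forall i j, `|B i j| <= c) ->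
  forall i j, `|row_mx A B i j| <= c.
Proof.
move=> A_le B_le i j; rewrite -(splitK j).
by case: (fintype.split j) => k /=; rewrite ?row_mxEl ?row_mxEr.
Qed.

Lemma le_1_add_expr4 (R : realDomainType) (q : R) : 0 <= q -> q <= 1 + q ^+ 4.
Proof.
move=> q0; have [q1|q1] := leP q 1; first by have := exprn_ge0 4 q0; lra.
by rewrite ler_wpDl // -[leLHS]expr1 ler_eXn2l // ltW.
Qed.

Section Attainment.
Variables (R : realType) (N1 J N3 L : nat) (X : tensor4 R N1 J N3 L).
Local Notation decomp := (decomp R N1 J N3 L).
Local Notation nentries := #|{: 'I_N1 * 'I_J * 'I_N3 * 'I_L}|.
Local Notation code := 'rV[R]_(nentries * (N1 + J + N3 + L)).

(* Decompositions of length nentries are stored in row vectors, one block of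
   coordinates per factor, so that compactness of boxes in 'rV applies. *)
Definition decode (P : code) : decomp nentries :=
  Decomp (fun s i => P 0 (mxvec_index s (lshift L (lshift N3 (lshift J i)))))
         (fun s j => P 0 (mxvec_index s (lshift L (lshift N3 (rshift N1 j)))))
         (fun s k => P 0 (mxvec_index s (lshift L (rshift (N1 + J) k))))
         (fun s l => P 0 (mxvec_index s (rshift (N1 + J + N3) l))).

Definition encode (d : decomp nentries) : code :=
  mxvec (row_mx (row_mx (row_mx (\matrix_(s, i) fac1 d s i) (\matrix_(s, j) fac2 d s j))
                        (\matrix_(s, k) fac3 d s k)) (\matrix_(s, l) fac4 d s l)).

Lemma encodeK : cancel encode decode.
Proof.
case=> f1 f2 f3 f4; rewrite /decode /encode.
by congr Decomp; do 2!apply: funext => ?; rewrite mxvecE ?row_mxEl ?row_mxEr mxE.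
Qed.

Lemma encode_coord_le (d : decomp nentries) B :
  factor_norms_le d (fun=> B) -> forall x, `|encode d 0 x| <= B.
Proof.
move=> d_le x; case/mxvec_indexP: x => s w; rewrite mxvecE.
have fac_le (n : nat) (f : 'I_nentries -> 'I_n -> R) :
    (forall s, norm2 (f s) <= B) -> forall s i, `|(\matrix_(s, i) f s i) s i| <= B.
  by move=> f_le s' i; rewrite mxE (le_trans (normr_le_norm2 _ _)).
by repeat apply: row_mx_entry_le; apply: fac_le => s'; case: (d_le s').
Qed.

Definition code_cost (P : code) := decomp_cost (decode P).

Lemma code_cost_continuous : continuous code_cost.
Proof.
apply: (@continuous_big R 'I_nentries +%R 0 xpredT add_continuous) => s _.
by apply: continuous_term_cost => i; exact: coord_continuous.
Qed.

Definition bounded_codes B :=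
  [set P : code | decomposes X (decode P) /\ forall x, `|P 0 x| <= B].

Lemma bounded_codes_compact B : compact (bounded_codes B).
Proof.
apply: (@subclosed_compact _ _ [set P : code | forall x, `[- B, B]%classic (P 0 x)]).
- apply: closedI; last first.
    apply: closed_forall => x; apply: closed_le_cst => P.
    by apply: continuous_comp; [exact: coord_continuous | exact: norm_continuous].
  do 4 apply: closed_forall => ?; apply: closed_eq_cst.
  apply: (@continuous_big R 'I_nentries +%R 0 xpredT add_continuous) => s _.
  by apply: continuous_rank1_term => i; exact: coord_continuous.
- exact: rV_compact (fun _ => @segment_compact R (- B) B).
- by move=> P [_ P_le] x /=; rewrite in_itv /= -ler_norml.
Qed.

Definition entry_decomp : decomp nentries :=
  let e s := enum_val s in
  Decomp (fun s i => X (e s).1.1.1 (e s).1.1.2 (e s).1.2 (e s).2 * (i == (e s).1.1.1)%:R)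
         (fun s j => (j == (e s).1.1.2)%:R) (fun s k => (k == (e s).1.2)%:R)
         (fun s l => (l == (e s).2)%:R).

Lemma decomposes_entry_decomp : decomposes X entry_decomp.
Proof.
move=> i1 i2 i3 i4; rewrite /rank1_term /=.
rewrite -(big_enum_val (A := {: 'I_N1 * 'I_J * 'I_N3 * 'I_L})
  (fun y => X y.1.1.1 y.1.1.2 y.1.2 y.2 * (i1 == y.1.1.1)%:R * (i2 == y.1.1.2)%:R
            * (i3 == y.1.2)%:R * (i4 == y.2)%:R)) /=.
rewrite (bigD1 (i1, i2, i3, i4)) //= !eqxx !mulr1 big1 ?addr0 // => -[[[y1 y2] y3] y4] /= y_neq.
do 4 (case: eqVneq => [e|_]; [subst | by rewrite /= !(mulr0, mul0r)]).
by rewrite eqxx in y_neq.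
Qed.

Lemma decomp_cost_attains_min : exists2 d : decomp nentries, decomposes X d &
  forall r (d' : decomp r), decomposes X d' -> decomp_cost d <= decomp_cost d'.
Proof.
(* Rescaled to equal factor norms, the decompositions of cost at most c0 have
   all factor norms at most c0^(1/4) <= B, hence codes in bounded_codes B. *)
pose c0 := decomp_cost entry_decomp; pose B := 1 + c0.
have code_of (d : decomp nentries) : decomposes X d -> decomp_cost d <= c0 ->
    exists2 P, bounded_codes B P & code_cost P = decomp_cost d.
  move=> dX d_le; have [d' [d'X d'_cost] d'_norms] := decomp_bounded_factors dX.
  exists (encode d'); last by rewrite /code_cost encodeK.
  split; first by rewrite encodeK.
  apply: encode_coord_le => s; have q_le : Num.sqrt (Num.sqrt (term_cost d s)) <= B.
    apply: le_trans (le_1_add_expr4 (sqrtr_ge0 _)) _.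
    rewrite (exprM _ 2 2) !sqr_sqrtr ?sqrtr_ge0 ?term_cost_ge0 // lerD2l.
    exact: le_trans (term_cost_le_decomp_cost d s) d_le.
  by case: (d'_norms s) => *; split; apply: le_trans q_le.
have [P0 P0_in P0_cost] := code_of _ decomposes_entry_decomp (lexx _).
have [Pmin /set_mem Pmin_in Pmin_le] := compact_EVT_min (ex_intro _ P0 P0_in)
  (@bounded_codes_compact B) (continuous_subspaceT code_cost_continuous).
exists (decode Pmin); first by case: Pmin_in.
move=> r d dX; have [d' d'X d'_le] := decomp_bounded_length dX.
apply: le_trans d'_le; have [d'_small|d'_large] := leP (decomp_cost d') c0.
  have [P P_in <-] := code_of d' d'X d'_small; exact/Pmin_le/mem_set.
apply/ltW/(le_lt_trans _ d'_large); rewrite /c0 -P0_cost; exact/Pmin_le/mem_set.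
Qed.

End Attainment.

Lemma inf_eq_min (R : realType) (S : set R) x : S x -> lbound S x -> inf S = x.
Proof.
move=> Sx x_lb; apply/le_anti/andP; split; first exact: (ge_inf (ex_intro _ x x_lb)).
exact: lb_le_inf (ex_intro _ x Sx) x_lb.
Qed.

Lemma nuclear_norm_attained (R : realType) N1 J N3 L (X : tensor4 R N1 J N3 L) :
  exists2 d : decomp R N1 J N3 L #|{: 'I_N1 * 'I_J * 'I_N3 * 'I_L}|, decomposes X d &
    nuclear_norm X = decomp_cost d /\
    forall r (d' : decomp R N1 J N3 L r), decomposes X d' -> nuclear_norm X <= decomp_cost d'.
Proof.
have [d dX d_min] := decomp_cost_attains_min X.
have nuc_d : nuclear_norm X = decomp_cost d.
  apply: inf_eq_min; first by exists _, (fac1 d), (fac2 d), (fac3 d), (fac4 d).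
  by move=> _ [r [a1 [a2 [a3 [a4 [aX ->]]]]]]; exact: (d_min _ (Decomp a1 a2 a3 a4)).
by exists d => //; split => // r d' d'X; rewrite nuc_d; exact: d_min.
Qed.

Lemma mulmx_diag_entry (F : pzRingType) m n (M : 'M[F]_(m, n)) (A : 'M[F]_n) i k :
  is_diag_mx A -> (M *m A) i k = M i k * A k k.
Proof.
move=> /is_diag_mxP A_diag; rewrite mxE (bigD1 k) //= big1 ?addr0 // => k' k'_neq.
by rewrite A_diag ?mulr0.
Qed.

Lemma trmx_diag (F : pzRingType) n (A : 'M[F]_n) : is_diag_mx A -> A^T = A.
Proof.
move=> /is_diag_mxP A_diag; apply/matrixP => i j; rewrite mxE.
by have [->|ij] := eqVneq i j; rewrite // !A_diag // eq_sym.
Qed.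

Lemma is_diag_mulmx (F : pzRingType) n (A B : 'M[F]_n) :
  is_diag_mx A -> is_diag_mx B -> is_diag_mx (A *m B).
Proof.
move=> A_diag B_diag; apply/is_diag_mxP => i j ij.
by rewrite mulmx_diag_entry // (is_diag_mxP A_diag) ?mul0r.
Qed.

Lemma sum_sum_split (R : comNzRingType) J L (f g : 'I_J -> R) (h k : 'I_L -> R) :
  \sum_(l < L) \sum_(j < J) (f j + h l + k l + g j) =
  L%:R * \sum_j (f j + g j) + J%:R * \sum_l (h l + k l).
Proof.
rewrite (eq_bigr (fun l => \sum_j (f j + g j) + J%:R * (h l + k l))) => [|l _].
  by rewrite big_split /= sumr_const card_ord -mulr_sumr [L%:R * _]mulr_natl.
rewrite (eq_bigr (fun j => (f j + g j) + (h l + k l))) => [|j _]; last by ring.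
by rewrite big_split /= sumr_const card_ord [J%:R * _]mulr_natl.
Qed.

Section Factorization.
Variables (R : realType) (N1 J N3 L : nat).
Local Notation decomp := (decomp R N1 J N3 L).
Local Notation sJ := (Num.sqrt (J%:R : R)).
Local Notation sL := (Num.sqrt (L%:R : R)).

Definition fact_decomp D (U : 'M[R]_(N1, D)) (V : 'M[R]_(N3, D))
    (Rm : 'I_J -> 'M[R]_D) (Tm : 'I_L -> 'M[R]_D) : decomp D :=
  Decomp (fun d i => U i d) (fun d j => Rm j d d) (fun d k => V k d) (fun d l => Tm l d d).

Definition decomp_U r (d : decomp r) : 'M[R]_(N1, r) := \matrix_(i, s) fac1 d s i.
Definition decomp_V r (d : decomp r) : 'M[R]_(N3, r) := \matrix_(k, s) fac3 d s k.
Definition decomp_R r (d : decomp r) j : 'M[R]_r := diag_mx (\row_s fac2 d s j).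
Definition decomp_T r (d : decomp r) l : 'M[R]_r := diag_mx (\row_s fac4 d s l).

Definition imbalance r (d : decomp r) s :=
  (sL * norm2 (fac1 d s) * norm2 (fac2 d s) - sJ * norm2 (fac3 d s) * norm2 (fac4 d s)) ^+ 2
  + (sJ * norm2 (fac1 d s) * norm2 (fac4 d s) - sL * norm2 (fac3 d s) * norm2 (fac2 d s)) ^+ 2.

Lemma sqrtJL_eq0 : sJ * sL = 0 -> (J = 0 \/ L = 0)%N.
Proof. by move/eqP; rewrite mulf_eq0 !sqrtr_eq0 !lern0 => /orP[]/eqP; [left|right]. Qed.

Lemma term_cost_sqrtJL_eq0 r (d : decomp r) s : sJ * sL = 0 -> term_cost d s = 0.
Proof.
by case/sqrtJL_eq0 => dim0; rewrite /term_cost (norm2_dim0 _ dim0) ?(mulr0, mul0r).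
Qed.

Lemma imbalance_sqrtJL_eq0 r (d : decomp r) s : sJ * sL = 0 -> imbalance d s = 0.
Proof.
case/sqrtJL_eq0 => dim0; rewrite /imbalance (norm2_dim0 _ dim0).
  have -> : sJ = 0 by rewrite dim0 sqrtr0.
  by rewrite !(mulr0, mul0r) subrr expr0n addr0.
have -> : sL = 0 by rewrite dim0 sqrtr0.
by rewrite !(mulr0, mul0r) subrr expr0n addr0.
Qed.

Lemma imbalance_ge0 r (d : decomp r) s : 0 <= imbalance d s.
Proof. by rewrite addr_ge0 ?sqr_ge0. Qed.

Lemma imbalance_eq0 r (d : decomp r) s : imbalance d s = 0 ->
  sL * norm2 (fac1 d s) * norm2 (fac2 d s) = sJ * norm2 (fac3 d s) * norm2 (fac4 d s) /\
  sJ * norm2 (fac1 d s) * norm2 (fac4 d s) = sL * norm2 (fac3 d s) * norm2 (fac2 d s).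
Proof.
move/eqP; rewrite paddr_eq0 ?sqr_ge0 // !sqrf_eq0 !subr_eq0.
by case/andP => /eqP-> /eqP->.
Qed.

Lemma decomp_balanced (X : tensor4 R N1 J N3 L) r (d : decomp r) : decomposes X d ->
  exists2 d' : decomp r, decomposes X d' /\ decomp_cost d' = decomp_cost d &
    forall s, imbalance d' s = 0.
Proof.
(* Rescale to |u_s| = |v_s| = 1, |r_s| = sqrt J g_s, |t_s| = sqrt L g_s,
   where sqrt(JL) g_s^2 is the cost of term s. *)
pose g s := Num.sqrt (term_cost d s / (sJ * sL)).
have g_ge0 s : 0 <= g s by exact: sqrtr_ge0.
pose one (s : 'I_r) : R := 1.
move=> dX; exists (normalize_decomp one (fun s => sJ * g s) one (fun s => sL * g s) d).
  apply: decomposes_normalize dX => s.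
  have -> : one s * (sJ * g s) * one s * (sL * g s) = sJ * sL * g s ^+ 2 by rewrite /one; ring.
  rewrite sqr_sqrtr ?divr_ge0 ?mulr_ge0 ?sqrtr_ge0 ?term_cost_ge0 //.
  have [JL0|JL_neq0] := eqVneq (sJ * sL) 0; first by rewrite JL0 mul0r term_cost_sqrtJL_eq0.
  by rewrite mulrC divfK.
move=> s; have [d_s0|] := eqVneq (term_cost d s) 0.
  have g0 : g s = 0 by rewrite /g d_s0 mul0r sqrtr0.
  have fac_norm0 n (v : 'I_n -> R) c : norm2 (fun i => c * g s / norm2 v * v i) = 0.
    by apply/le_anti; rewrite norm2_ge0 andbT (le_trans (norm2_normalize_le _ _)) ?g0 ?mulr0.
  by rewrite /imbalance /= !fac_norm0 !(mulr0, subrr) expr0n addr0.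
rewrite /term_cost !mulf_eq0 !negb_or -!andbA => /and4P[n1 n2 n3 n4].
by rewrite /imbalance /= !norm2_normalize ?mulr_ge0 ?sqrtr_ge0 //; ring.
Qed.

Lemma fact_decomp_of_decomp r (d : decomp r) :
  fact_decomp (decomp_U d) (decomp_V d) (decomp_R d) (decomp_T d) = d.
Proof.
case: d => f1 f2 f3 f4; rewrite /fact_decomp.
by congr Decomp; do 2!apply: funext => ?; rewrite !mxE ?eqxx ?mulr1n.
Qed.

Lemma factorization_entry D (U : 'M[R]_(N1, D)) (V : 'M[R]_(N3, D)) (A B : 'M[R]_D) i k :
  is_diag_mx A -> is_diag_mx B ->
  (U *m (A *m B) *m V^T) i k = \sum_d U i d * A d d * V k d * B d d.
Proof.
move=> A_diag B_diag; rewrite mxE; apply: eq_bigr => d _.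
by rewrite mulmx_diag_entry ?is_diag_mulmx // mulmx_diag_entry // !mxE; ring.
Qed.

Lemma decomposes_fact_decomp (X : tensor4 R N1 J N3 L) D U V (Rm : 'I_J -> 'M[R]_D) Tm :
  is_factorization X U V Rm Tm -> decomposes X (fact_decomp U V Rm Tm).
Proof. by case=> Rm_diag [Tm_diag UVX] i j k l; rewrite UVX factorization_entry. Qed.

Lemma is_factorization_decomp (X : tensor4 R N1 J N3 L) r (d : decomp r) :
  decomposes X d ->
  is_factorization X (decomp_U d) (decomp_V d) (decomp_R d) (decomp_T d).
Proof.
move=> dX; split; first by move=> j; exact: diag_mx_is_diag.
split; first by move=> l; exact: diag_mx_is_diag.
move=> i j k l; rewrite factorization_entry ?diag_mx_is_diag // dX.
by rewrite -{1}(fact_decomp_of_decomp d).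
Qed.

End Factorization.

Section FactorizationCost.
Variables (R : realType) (N1 J N3 L D : nat).
Variables (U : 'M[R]_(N1, D)) (V : 'M[R]_(N3, D)) (Rm : 'I_J -> 'M[R]_D) (Tm : 'I_L -> 'M[R]_D).
Hypotheses (Rm_diag : forall j, is_diag_mx (Rm j)) (Tm_diag : forall l, is_diag_mx (Tm l)).
Local Notation fd := (fact_decomp U V Rm Tm).
Local Notation sJ := (Num.sqrt (J%:R : R)).
Local Notation sL := (Num.sqrt (L%:R : R)).

Lemma sum_frob2_mulmx_diag m I (M : 'M[R]_(m, D)) (A : 'I_I -> 'M[R]_D) :
  (forall j, is_diag_mx (A j)) ->
  \sum_j frob2 (M *m A j)
  = \sum_d norm2 (fun i => M i d) ^+ 2 * norm2 (fun j => A j d d) ^+ 2.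
Proof.
move=> A_diag; have frob2_col j : frob2 (M *m A j) = \sum_d \sum_i M i d ^+ 2 * A j d d ^+ 2.
  rewrite /frob2 exchange_big; apply: eq_bigr => d _; apply: eq_bigr => i _.
  by rewrite mulmx_diag_entry // exprMn.
under eq_bigr do rewrite frob2_col.
rewrite exchange_big; apply: eq_bigr => d _; rewrite !norm2_sqr mulr_suml exchange_big.
by apply: eq_bigr => i _; rewrite mulr_sumr.
Qed.

Lemma fact_cost_columns : fact_cost U V Rm Tm = (4 * Num.sqrt (J * L)%:R)^-1 *
  \sum_d (L%:R * (norm2 (fac1 fd d) ^+ 2 * norm2 (fac2 fd d) ^+ 2
                  + norm2 (fac3 fd d) ^+ 2 * norm2 (fac2 fd d) ^+ 2)
          + J%:R * (norm2 (fac3 fd d) ^+ 2 * norm2 (fac4 fd d) ^+ 2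
                  + norm2 (fac1 fd d) ^+ 2 * norm2 (fac4 fd d) ^+ 2)).
Proof.
rewrite /fact_cost; congr (_ * _).
under eq_bigr do under eq_bigr do rewrite !trmx_diag //.
rewrite sum_sum_split !big_split /= !sum_frob2_mulmx_diag //.
by rewrite -!mulr_sumr -!big_split.
Qed.

Lemma fact_cost_decomp : fact_cost U V Rm Tm =
  decomp_cost fd + (4 * Num.sqrt (J * L)%:R)^-1 * \sum_d imbalance fd d.
Proof.
have sqrtJL : Num.sqrt (J * L)%:R = sJ * sL :> R by rewrite natrM sqrtrM ?ler0n.
rewrite fact_cost_columns sqrtJL.
rewrite (eq_bigr (fun d => 4 * (sJ * sL) * term_cost fd d + imbalance fd d)) => [|d _].
  rewrite big_split /= mulrDr -mulr_sumr; congr (_ + _).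
  (* if J L = 0, the prefactor is 0^-1 = 0 and every term cost vanishes *)
  have [JL0|JL_neq0] := eqVneq (sJ * sL) 0; last by rewrite mulKf // mulf_neq0.
  by rewrite JL0 !(mulr0, mul0r) /decomp_cost big1 // => d _; exact: term_cost_sqrtJL_eq0.
(* the AM-GM identity, once J and L are written as squares *)
rewrite -[in LHS](sqr_sqrtr (ler0n R L)) -[in LHS](sqr_sqrtr (ler0n R J)).
by rewrite /term_cost /imbalance; ring.
Qed.

Lemma decomp_cost_le_fact_cost : decomp_cost fd <= fact_cost U V Rm Tm.
Proof.
rewrite fact_cost_decomp lerDl mulr_ge0 ?invr_ge0 ?mulr_ge0 ?sqrtr_ge0 //.
by apply: sumr_ge0 => d _; exact: imbalance_ge0.
Qed.

Lemma fact_cost_eq_balanced : fact_cost U V Rm Tm = decomp_cost fd ->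
  forall d, imbalance fd d = 0.
Proof.
move=> cost_eq d; have [JL0|JL_neq0] := eqVneq (sJ * sL) 0.
  exact: imbalance_sqrtJL_eq0.
move: cost_eq; rewrite fact_cost_decomp -[RHS]addr0 => /addrI/eqP.
rewrite mulf_eq0 invr_eq0 mulf_eq0 pnatr_eq0 /= natrM sqrtrM ?ler0n // (negbTE JL_neq0) /=.
move/eqP/psumr_eq0P => /(_ (fun d _ => imbalance_ge0 fd d)); exact.
Qed.

End FactorizationCost.

Theorem theorem3 (R : realType) (N1 J N3 L : nat) (X : tensor4 R N1 J N3 L) :
  (exists (D : nat) (U : 'M[R]_(N1, D)) (V : 'M[R]_(N3, D))
          (Rm : 'I_J -> 'M[R]_D) (Tm : 'I_L -> 'M[R]_D),
      is_factorization X U V Rm Tm /\ fact_cost U V Rm Tm = nuclear_norm X) /\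
  (forall (D : nat) (U : 'M[R]_(N1, D)) (V : 'M[R]_(N3, D))
          (Rm : 'I_J -> 'M[R]_D) (Tm : 'I_L -> 'M[R]_D),
      is_factorization X U V Rm Tm -> nuclear_norm X <= fact_cost U V Rm Tm) /\
  (forall (D : nat) (U : 'M[R]_(N1, D)) (V : 'M[R]_(N3, D))
          (Rm : 'I_J -> 'M[R]_D) (Tm : 'I_L -> 'M[R]_D),
      is_factorization X U V Rm Tm -> fact_cost U V Rm Tm = nuclear_norm X ->
      forall d : 'I_D,
        Num.sqrt (L%:R) * norm2 (fun i => U i d) * norm2 (fun j => Rm j d d)
        = Num.sqrt (J%:R) * norm2 (fun k => V k d) * norm2 (fun l => Tm l d d) /\
        Num.sqrt (J%:R) * norm2 (fun i => U i d) * norm2 (fun l => Tm l d d)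
        = Num.sqrt (L%:R) * norm2 (fun k => V k d) * norm2 (fun j => Rm j d d)).
Proof.
have [d dX [nuc_d nuc_le]] := nuclear_norm_attained X.
split; [|split].
- have [d' [d'X d'_cost] d'_bal] := decomp_balanced dX.
  exists _, (decomp_U d'), (decomp_V d'), (decomp_R d'), (decomp_T d').
  have [Rm_diag [Tm_diag _]] := is_factorization_decomp d'X.
  split; first exact: is_factorization_decomp.
  rewrite fact_cost_decomp // fact_decomp_of_decomp big1 ?mulr0 ?addr0 //.
  by rewrite d'_cost nuc_d.
- move=> D U V Rm Tm UVX; have [Rm_diag [Tm_diag _]] := UVX.
  apply: le_trans (nuc_le _ _ (decomposes_fact_decomp UVX)) _.
  exact: decomp_cost_le_fact_cost.
- move=> D U V Rm Tm UVX cost_eq s; have [Rm_diag [Tm_diag _]] := UVX.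
  apply: (imbalance_eq0 (d := fact_decomp U V Rm Tm)).
  apply: (fact_cost_eq_balanced Rm_diag Tm_diag); apply/le_anti.
  rewrite decomp_cost_le_fact_cost // andbT cost_eq.
  exact: nuc_le (decomposes_fact_decomp UVX).
Qed.
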